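(* Let $\mathbb G=V_1\times V_2$ be a step-two Carnot group and $f\in\mathcal A_h(\mathbb G)$. Then $f$ is $\Sigma$-affine, i.e. for every $(x,z)\in\mathbb G$ and every $(x',z')\in\Sigma$, the map $t\in\mathbb R\mapsto f((x,z)\cdot(tx',tz'))$ is affine.
   Context: A step-two Carnot group is $\mathbb G=V_1\times V_2$, where $V_1,V_2$ are finite-dimensional real vector spaces with $V_2\neq\{0\}$, equipped with a bilinear skew-symmetric map $[\cdot,\cdot]:V_1\times V_1\to V_2$ with $\operatorname{span}\{[x,x']:x,x'\in V_1\}=V_2$, and group law $(x,z)\cdot(x',z')=(x+x',z+z'+[x,x'])$. $\mathcal A_h(\mathbb G)$ is the space of $h$-affine maps $f:\mathbb G\to\mathbb R$, i.e. such that for all $(x,z)\in\mathbb G$, $y\in V_1$, $t\mapsto f((x,z)\cdot(ty,0))$ is affine. For $x,y\in V_1$, $\operatorname{Lie}(x,y):=\operatorname{span}\{x,y\}\times\operatorname{span}\{[x,y]\}\subset\mathbb G$, and $\Sigma:=\bigcup_{x,y\in V_1}\operatorname{Lie}(x,y)$. *)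

From HB Require Import structures.
From mathcomp Require Import all_boot all_order all_algebra.
From mathcomp Require Import reals.
Set Implicit Arguments. Unset Strict Implicit. Unset Printing Implicit Defensive.
Import Order.TTheory GRing.Theory Num.Theory.
Local Open Scope ring_scope.

Section Carnot.
Variables (R : realType) (n m : nat).
Notation V1 := 'rV[R]_n.
Notation V2 := 'rV[R]_m.
Notation G := (V1 * V2)%type.

Definition bracket_bilinear (br : V1 -> V1 -> V2) : Prop :=
  (forall (a : R) (x y x' : V1), br (a *: x + y) x' = a *: br x x' + br y x') /\
  (forall (a : R) (x x' y' : V1), br x (a *: x' + y') = a *: br x x' + br x y').

Definition bracket_skew (br : V1 -> V1 -> V2) : Prop :=
  forall x y : V1, br x y = - br y x.

Definition bracket_spans (br : V1 -> V1 -> V2) : Prop :=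
  forall z : V2, exists (k : nat) (c : 'I_k -> R) (u v : 'I_k -> V1),
    z = \sum_(i < k) c i *: br (u i) (v i).

Definition gmul (br : V1 -> V1 -> V2) (p q : G) : G :=
  (p.1 + q.1, p.2 + q.2 + br p.1 q.1).

Definition affine_fun (g : R -> R) : Prop :=
  exists a b : R, forall t : R, g t = a * t + b.

Definition h_affine (br : V1 -> V1 -> V2) (f : G -> R) : Prop :=
  forall (p : G) (y : V1), affine_fun (fun t => f (gmul br p (t *: y, 0))).

Definition in_Lie (br : V1 -> V1 -> V2) (x y : V1) (q : G) : Prop :=
  (exists a b : R, q.1 = a *: x + b *: y) /\ (exists c : R, q.2 = c *: br x y).

Definition in_Sigma (br : V1 -> V1 -> V2) (q : G) : Prop :=
  exists x y : V1, in_Lie br x y q.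

Definition Sigma_affine (br : V1 -> V1 -> V2) (f : G -> R) : Prop :=
  forall p q : G, in_Sigma br q ->
    affine_fun (fun t => f (gmul br p (t *: q.1, t *: q.2))).

End Carnot.

From HB Require Import structures.
From mathcomp Require Import all_boot all_order all_algebra.
From mathcomp Require Import reals.
From mathcomp Require Import ring.
Set Implicit Arguments. Unset Strict Implicit. Unset Printing Implicit Defensive.
Import Order.TTheory GRing.Theory Num.Theory.
Local Open Scope ring_scope.

(* Every line of Sigma through p is either vertical, t |-> p.(0, t[x,y]), or of
   the form t |-> p.(tv, t[u,v]).  Restricting an h-affine f to the horizontal
   line through p in direction w gives f(p.(-w,0)) = (f p + f(p.(-2w,0)))/2.
   Letting p and w move affinely in t along horizontal lines, the left-hand side
   runs along a vertical line while the right-hand side is the average of two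
   horizontal lines.  In the same way the line t |-> p.(tv, 3t[e,v]) is the
   average of a horizontal and a vertical line. *)

Section AffineFun.
Variable R : realType.
Implicit Types g h : R -> R.

Lemma eq_affine_fun g h : affine_fun g -> (forall t, h t = g t) -> affine_fun h.
Proof. by move=> [a [b gE]] hE; exists a, b => t; rewrite hE gE. Qed.

Lemma affine_fun_avg g1 g2 h : affine_fun g1 -> affine_fun g2 ->
  (forall t, h t = (g1 t + g2 t) / 2) -> affine_fun h.
Proof.
move=> [a1 [b1 g1E]] [a2 [b2 g2E]] hE.
by exists ((a1 + a2) / 2), ((b1 + b2) / 2) => t; rewrite hE g1E g2E; field.
Qed.

Lemma affine_funMr g k : affine_fun g -> affine_fun (fun t => g (k * t)).
Proof. by move=> [a [b gE]]; exists (a * k), b => t; rewrite gE; ring. Qed.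

Lemma affine_fun_midpoint g : affine_fun g -> g (-1) = (g 0 + g (-2)) / 2.
Proof. by move=> [a [b gE]]; rewrite !gE; field. Qed.

End AffineFun.

Section Bracket.
Variables (R : realType) (n m : nat) (br : 'rV[R]_n -> 'rV[R]_n -> 'rV[R]_m).
Hypotheses (br_bilin : bracket_bilinear br) (br_skew : bracket_skew br).

Lemma bracketDl x y z : br (x + y) z = br x z + br y z.
Proof. by have := br_bilin.1 1 x y z; rewrite !scale1r. Qed.

Lemma bracketDr x y z : br z (x + y) = br z x + br z y.
Proof. by have := br_bilin.2 1 z x y; rewrite !scale1r. Qed.

Lemma bracket0l z : br 0 z = 0.
Proof. by apply: (addrI (br 0 z)); rewrite -bracketDl !addr0. Qed.

Lemma bracket0r z : br z 0 = 0.
Proof. by apply: (addrI (br z 0)); rewrite -bracketDr !addr0. Qed.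

Lemma bracketZl a x z : br (a *: x) z = a *: br x z.
Proof. by have := br_bilin.1 a x 0 z; rewrite addr0 bracket0l addr0. Qed.

Lemma bracketZr a x z : br z (a *: x) = a *: br z x.
Proof. by have := br_bilin.2 a z x 0; rewrite addr0 bracket0r addr0. Qed.

Lemma bracketNl x z : br (- x) z = - br x z.
Proof. by rewrite -scaleN1r bracketZl scaleN1r. Qed.

Lemma bracketNr x z : br z (- x) = - br z x.
Proof. by rewrite -scaleN1r bracketZr scaleN1r. Qed.

Lemma bracketxx x : br x x = 0.
Proof.
have /eqP : 2%:R *: br x x = 0 by rewrite scaler_nat mulr2n {1}br_skew addNr.
by rewrite scaler_eq0 pnatr_eq0 => /eqP.
Qed.

Lemma in_Sigma_cases q : in_Sigma br q ->
  (exists u, q.2 = br u q.1) \/ (exists x y, q = (0, br x y)).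
Proof.
case: q => q1 q2 [x [y [[a [b /= ->]] [c /= ->]]]].
have [-> | a0] := eqVneq a 0; last first.
  left; exists (- (c / a) *: y).
  rewrite bracketDr !bracketZl !bracketZr bracketxx !scaler0 addr0 scalerA.
  by rewrite mulNr divfK // scaleNr -scalerN -br_skew.
rewrite scale0r add0r; have [-> | b0] := eqVneq b 0.
  by right; exists (c *: x), y; rewrite scale0r bracketZl.
left; exists ((c / b) *: x).
by rewrite bracketZl bracketZr scalerA divfK.
Qed.

Ltac gmul_simpl x y :=
  rewrite /gmul /=; congr pair;
  rewrite ?(bracketDl, bracketDr, bracketZl, bracketZr, bracketNl, bracketNr,
            bracket0l, bracket0r, bracketxx) ?(br_skew y x);
  apply/rowP => i; rewrite !mxE; ring.

Variables (f : 'rV[R]_n * 'rV[R]_m -> R) (f_haff : h_affine br f).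

Lemma h_affine_midpoint p w :
  f (gmul br p (- w, 0)) = (f p + f (gmul br p (- (2 *: w), 0))) / 2.
Proof.
have := affine_fun_midpoint (f_haff p w).
rewrite /= scale0r !scaleNr scale1r.
suff -> : gmul br p (0, 0) = p by [].
by case: p => p1 p2; rewrite /gmul /= bracket0r !addr0.
Qed.

Lemma h_affine_vertical p x y :
  affine_fun (fun t => f (gmul br p (0, t *: br x y))).
Proof.
apply: affine_fun_avg (f_haff (gmul br p (x, 0)) y)
                      (f_haff (gmul br p (- x, 0)) (- y)) _ => t.
rewrite (_ : gmul br p _ =
  gmul br (gmul br (gmul br p (x, 0)) (t *: y, 0)) (- (x + t *: y), 0)).
  by rewrite h_affine_midpoint; congr ((_ + f _) / 2); gmul_simpl y x.
by gmul_simpl y x.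
Qed.

Lemma h_affine_bracket_line p u v :
  affine_fun (fun t => f (gmul br p (t *: v, t *: br u v))).
Proof.
suff line3 e : affine_fun (fun t => f (gmul br p (t *: v, t *: br (3%:R *: e) v))).
  by have := line3 (3%:R^-1 *: u); rewrite scalerA divff ?pnatr_eq0 // scale1r.
apply: affine_fun_avg (affine_funMr 2 (f_haff (gmul br p (e, 0)) v))
                      (h_affine_vertical (gmul br p (- e, 0)) (4%:R *: e) v) _ => t.
rewrite (_ : gmul br p _ =
  gmul br (gmul br (gmul br p (e, 0)) ((2 * t) *: v, 0)) (- (e + t *: v), 0)).
  by rewrite h_affine_midpoint; congr ((_ + f _) / 2); gmul_simpl v e.
by gmul_simpl v e.
Qed.

End Bracket.

Theorem proposition3p7 (R : realType) (n m : nat)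
  (br : 'rV[R]_n -> 'rV[R]_n -> 'rV[R]_m) :
  (0 < m)%N ->
  bracket_bilinear br -> bracket_skew br -> bracket_spans br ->
  forall f : 'rV[R]_n * 'rV[R]_m -> R,
    h_affine br f -> Sigma_affine br f.
Proof.
move=> _ br_bilin br_skew _ f f_haff p q /(in_Sigma_cases br_bilin br_skew).
case=> [[u ->] | [x [y ->]]] /=.
  exact: h_affine_bracket_line.
apply: (eq_affine_fun (h_affine_vertical br_bilin br_skew f_haff p x y)) => t.
by rewrite scaler0.
Qed.
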